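(* Let $K$ be an algebraically closed field, let $f\colon\mathbb Z^k\to K$ be a hypergeometric term on $\mathbb Z^k$, and suppose $f$ is factorial on a region $\mathcal R\subset\mathbb Z^k$. Then there exist a vector $\boldsymbol\gamma=(\gamma_1,\dots,\gamma_k)\in K^k$, constants $m_1,\dots,m_p,n_1,\dots,n_q\in K$, vectors $\vec v_1,\dots,\vec v_p,\vec w_1,\dots,\vec w_q\in\mathbb Z^k$ and integers $r_1,\dots,r_p,s_1,\dots,s_q$ such that for all $\vec z\in\mathcal R$: (1) $f(\vec z)=\gamma_1^{z_1}\cdots\gamma_k^{z_k}\,\dfrac{\prod_{i=1}^p(m_i)_{\vec v_i\cdot\vec z+r_i}}{\prod_{j=1}^q(n_j)_{\vec w_j\cdot\vec z+s_j}}$; (2) $\vec v_i\cdot\vec z+r_i$ and $\vec w_j\cdot\vec z+s_j$ are positive integers for all $i\in\{1,\dots,p\}$, $j\in\{1,\dots,q\}$; (3) all the terms appearing in the numerator and denominator are nonzero.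
   Context: A hypergeometric term on $\mathbb Z^k$ over $K$ is a function $f\colon\mathbb Z^k\to K$ such that for each $i$ there are nonzero polynomials $A_i,B_i\in K[\vec z]$ with $A_i(\vec z)f(\vec z)=B_i(\vec z)f(\vec z+\vec e_i)$ for all $\vec z\in\mathbb Z^k$. $f$ is factorial on a region $\mathcal R\subset\mathbb Z^k$ if there exist a finite set $V\subset\mathbb Z^k$, and for each $\vec v\in V$ univariate polynomials $a_{\vec v},b_{\vec v}\in K[z]$ and an integer $n_{\vec v}$, such that for all $\vec z\in\mathcal R$: $f(\vec z)=\prod_{\vec v\in V}\prod_{j=1}^{\vec v\cdot\vec z+n_{\vec v}}a_{\vec v}(j)/b_{\vec v}(j)$; each $\vec v\cdot\vec z+n_{\vec v}$ is a positive integer; and $a_{\vec v}(j)\ne0$, $b_{\vec v}(j)\ne0$ for $1\le j\le\vec v\cdot\vec z+n_{\vec v}$. The Pochhammer symbol is $(m)_r=m(m+1)\cdots(m+r-1)$. *)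

From HB Require Import structures.
From mathcomp Require Import all_boot all_order all_algebra.
From mathcomp Require Import mpoly.
Set Implicit Arguments. Unset Strict Implicit. Unset Printing Implicit Defensive.
Import Order.TTheory GRing.Theory Num.Theory.
Local Open Scope ring_scope.

(* Points of Z^k are functions 'I_k -> int; vectors used as data in
   finite families are finite functions {ffun 'I_k -> int} (an eqType). *)
Definition zpt (k : nat) := 'I_k -> int.

Definition zdot (k : nat) (v : 'I_k -> int) (z : zpt k) : int :=
  \sum_(i < k) v i * z i.

Definition zshift (k : nat) (z : zpt k) (i : 'I_k) : zpt k :=
  fun j => z j + (j == i)%:R.

Definition zembed (K : nzRingType) (k : nat) (z : zpt k) : 'I_k -> K :=
  fun j => (z j)%:~R.

Definition hypergeometric (K : fieldType) (k : nat) (f : zpt k -> K) : Prop :=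
  forall i : 'I_k, exists A B : {mpoly K[k]},
    A != 0 /\ B != 0 /\
    forall z : zpt k,
      A.@[zembed K z] * f z = B.@[zembed K z] * f (zshift z i).

(* f is factorial on the region R.  The finite set V is given as a
   duplicate-free list of entries (v, a_v, b_v, n_v). *)
Definition factorial_on (K : fieldType) (k : nat) (f : zpt k -> K)
    (R : zpt k -> Prop) : Prop :=
  exists V : seq ({ffun 'I_k -> int} * {poly K} * {poly K} * int),
    uniq [seq e.1.1.1 | e <- V] /\
    forall z : zpt k, R z ->
      [/\ f z = \prod_(e <- V)
                 \prod_(1 <= j < (absz (zdot e.1.1.1 z + e.2)).+1)
                    (e.1.1.2.[j%:R] / e.1.2.[j%:R]),
          forall e, e \in V -> 0 < zdot e.1.1.1 z + e.2
        & forall e, e \in V -> forall j : nat,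
            ((1 <= j)%N && (j <= absz (zdot e.1.1.1 z + e.2)%R)%N) ->
            e.1.1.2.[j%:R] != 0 /\ e.1.2.[j%:R] != 0].

Definition poch (K : nzRingType) (m : K) (r : nat) : K :=
  \prod_(i < r) (m + i%:R).

From HB Require Import structures.
From mathcomp Require Import all_boot all_order all_algebra.
From mathcomp Require Import mpoly.
From mathcomp Require Import ring.
Set Implicit Arguments. Unset Strict Implicit. Unset Printing Implicit Defensive.
Import Order.TTheory GRing.Theory Num.Theory.
Local Open Scope ring_scope.

(* Over an algebraically closed field every polynomial factors as
   p = c (X - a_1) ... (X - a_d), so
   p(1) p(2) ... p(N) = c^N (1 - a_1)_N ... (1 - a_d)_N.
   Applying this to the numerator and denominator polynomials of each factor
   of the factorial representation turns it into a quotient of Pochhammer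
   symbols times c^(v.z + n); the latter is a geometric term
   prod_i (c^(v_i))^(z_i) times the constant c^n, which we record as the
   one-term Pochhammer symbol (c^n)_1. *)

Lemma prod_horner_split (R : comNzRingType) (c : R) (s : seq R) (N : nat) :
  \prod_(1 <= j < N.+1) (c *: \prod_(a <- s) ('X - a%:P)).[j%:R] =
  c ^+ N * \prod_(a <- s) poch (1 - a) N.
Proof.
rewrite big_add1 /= big_mkord.
transitivity (\prod_(i < N) (c * \prod_(a <- s) ((i.+1)%:R - a))).
  apply: eq_bigr => i _; rewrite hornerZ horner_prod; congr (_ * _).
  by apply: eq_bigr => a _; rewrite hornerXsubC.
rewrite big_split /= prodr_const card_ord; congr (_ * _).
rewrite exchange_big /=; apply: eq_bigr => a _.
by apply: eq_bigr => i _; rewrite -addn1 natrD; ring.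
Qed.

Section RootSeq.
Variable K : closedFieldType.

Definition root_seq (p : {poly K}) : seq K := sval (closed_field_poly_normal p).

Lemma root_seqE (p : {poly K}) :
  p = lead_coef p *: \prod_(a <- root_seq p) ('X - a%:P).
Proof. exact: svalP (closed_field_poly_normal p). Qed.

Lemma horner_root_seq_neq0 (p : {poly K}) (x a : K) :
  p.[x] != 0 -> a \in root_seq p -> x - a != 0.
Proof.
move=> px_neq0 a_root; apply: contraNneq px_neq0 => xa0.
rewrite (root_seqE p) hornerZ horner_prod (big_rem a a_root) /=.
by rewrite hornerXsubC xa0 mul0r mulr0.
Qed.

Lemma prod_horner_ratio (a b : {poly K}) (N : nat) :
  \prod_(1 <= j < N.+1) (a.[j%:R] / b.[j%:R]) =
  (lead_coef a / lead_coef b) ^+ N *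
  (\prod_(r <- root_seq a) poch (1 - r) N) /
  (\prod_(r <- root_seq b) poch (1 - r) N).
Proof.
rewrite prodf_div {1}[a]root_seqE {1}[b]root_seqE !prod_horner_split.
by rewrite expr_div_n invfM; ring.
Qed.

Lemma prod_exprz_zdot (I : eqType) (r : seq I) (c : I -> K) (k : nat)
    (v : I -> 'I_k -> int) (z : zpt k) :
  (forall e, e \in r -> c e != 0) ->
  \prod_(i < k) (\prod_(e <- r) c e ^ v e i) ^ z i =
  \prod_(e <- r) c e ^ zdot (v e) z.
Proof.
move=> c_neq0.
rewrite (eq_bigr (fun i => \prod_(e <- r) (c e ^ v e i) ^ z i)); last first.
  by move=> i _; rewrite (big_morph _ (fun x y => expfzMl x y (z i)) (exp1rz _ _)).
rewrite exchange_big /=; apply: eq_big_seq => e /c_neq0 ce_neq0.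
rewrite /zdot (big_morph _ (fun m n => expfzDr m n ce_neq0) (expr0z _)).
by apply: eq_bigr => i _; rewrite exprz_exp.
Qed.

End RootSeq.

Section FactorialToPochhammer.
Variables (K : closedFieldType) (k : nat).

Local Notation entry := ({ffun 'I_k -> int} * {poly K} * {poly K} * int)%type.
Local Notation pfactor := (K * {ffun 'I_k -> int} * int)%type.

Definition entry_lead (e : entry) : K := lead_coef e.1.1.2 / lead_coef e.1.2.

Definition entry_gamma (V : seq entry) (i : 'I_k) : K :=
  \prod_(e <- V) entry_lead e ^ e.1.1.1 i.

Definition entry_num (V : seq entry) : seq pfactor :=
  (\prod_(e <- V) entry_lead e ^ e.2, [ffun=> 0], 1) ::
  [seq (1 - a, e.1.1.1, e.2) | e <- V, a <- root_seq e.1.1.2].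

Definition entry_den (V : seq entry) : seq pfactor :=
  [seq (1 - a, e.1.1.1, e.2) | e <- V, a <- root_seq e.1.2].

Lemma zdot0 (z : zpt k) : zdot [ffun=> 0] z = 0.
Proof. by rewrite /zdot big1 // => i _; rewrite ffunE mul0r. Qed.

Variables (V : seq entry) (z : zpt k).
Hypothesis V_pos : forall e, e \in V -> 0 < zdot e.1.1.1 z + e.2.
Hypothesis V_neq0 : forall e, e \in V -> forall j : nat,
  ((1 <= j)%N && (j <= absz (zdot e.1.1.1 z + e.2)%R)%N) ->
  e.1.1.2.[j%:R] != 0 /\ e.1.2.[j%:R] != 0.

Lemma entry_lead_neq0 e : e \in V -> entry_lead e != 0.
Proof.
move=> eV; have [] := V_neq0 eV (j := 1%N).
  by rewrite leqnn absz_gt0 gt_eqF ?V_pos.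
move=> a1_neq0 b1_neq0; rewrite mulf_neq0 ?invr_eq0 // lead_coef_eq0.
  by apply: contraNneq a1_neq0 => ->; rewrite horner0.
by apply: contraNneq b1_neq0 => ->; rewrite horner0.
Qed.

Lemma factorial_pochE :
  \prod_(e <- V) \prod_(1 <= j < (absz (zdot e.1.1.1 z + e.2)).+1)
      (e.1.1.2.[j%:R] / e.1.2.[j%:R]) =
  (\prod_(i < k) entry_gamma V i ^ z i) *
  (\prod_(e <- entry_num V) poch e.1.1 (absz (zdot e.1.2 z + e.2))) /
  (\prod_(e <- entry_den V) poch e.1.1 (absz (zdot e.1.2 z + e.2))).
Proof.
have lead_exprz e : e \in V ->
    entry_lead e ^+ absz (zdot e.1.1.1 z + e.2) =
    entry_lead e ^ zdot e.1.1.1 z * entry_lead e ^ e.2.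
  move=> eV; rewrite -expfzDr ?entry_lead_neq0 //.
  by rewrite -[zdot _ _ + _]gtz0_abs ?V_pos.
rewrite (eq_big_seq _ (fun e _ => prod_horner_ratio _ _ _)) /=.
rewrite (eq_big_seq _ (fun e eV => congr1 (fun x => x * _ / _) (lead_exprz e eV))).
rewrite prodf_div !big_split /= /entry_gamma prod_exprz_zdot; last first.
  exact: entry_lead_neq0.
rewrite /entry_num /entry_den big_cons zdot0 add0r /poch big_ord1 addr0.
by rewrite !big_allpairs_dep /= !mulrA.
Qed.

Lemma entry_num_pos e : e \in entry_num V -> 0 < zdot e.1.2 z + e.2.
Proof.
rewrite inE => /orP [/eqP -> | /allpairsPdep [e' [a [e'V _ ->]]]]; last exact: V_pos.
by rewrite /= zdot0.
Qed.

Lemma entry_den_pos e : e \in entry_den V -> 0 < zdot e.1.2 z + e.2.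
Proof. by move=> /allpairsPdep [e' [a [e'V _ ->]]]; exact: V_pos. Qed.

Lemma shifted_root_neq0 (p : {poly K}) a (j : nat) :
  p.[j.+1%:R] != 0 -> a \in root_seq p -> 1 - a + j%:R != 0.
Proof.
move=> pj_neq0 a_root; rewrite (_ : 1 - a + j%:R = j.+1%:R - a).
  exact: horner_root_seq_neq0 pj_neq0 a_root.
by rewrite -addn1 natrD; ring.
Qed.

Lemma entry_num_neq0 e : e \in entry_num V -> forall j : nat,
  (j < absz (zdot e.1.2 z + e.2)%R)%N -> e.1.1 + j%:R != 0.
Proof.
rewrite inE => /orP [/eqP -> j | /allpairsPdep [e' [a [e'V a_root ->]]] j j_lt].
  rewrite /= zdot0 ltnS leqn0 => /eqP ->; rewrite addr0 prodf_seq_neq0.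
  by apply/allP => e0 e0V; rewrite expfz_neq0 ?entry_lead_neq0.
by have [+ _] := V_neq0 e'V (j := j.+1) j_lt; move/shifted_root_neq0; apply.
Qed.

Lemma entry_den_neq0 e : e \in entry_den V -> forall j : nat,
  (j < absz (zdot e.1.2 z + e.2)%R)%N -> e.1.1 + j%:R != 0.
Proof.
move=> /allpairsPdep [e' [a [e'V a_root ->]]] j j_lt.
by have [_ +] := V_neq0 e'V (j := j.+1) j_lt; move/shifted_root_neq0; apply.
Qed.

End FactorialToPochhammer.

Theorem lemmaB23 (K : closedFieldType) (k : nat) (f : zpt k -> K)
    (R : zpt k -> Prop) :
  hypergeometric f -> factorial_on f R ->
  exists (gamma : 'I_k -> K)
         (num : seq (K * {ffun 'I_k -> int} * int))
         (den : seq (K * {ffun 'I_k -> int} * int)),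
    forall z : zpt k, R z ->
      [/\ f z = (\prod_(i < k) gamma i ^ z i) *
                (\prod_(e <- num) poch e.1.1 (absz (zdot e.1.2 z + e.2))) /
                (\prod_(e <- den) poch e.1.1 (absz (zdot e.1.2 z + e.2))),
          (forall e, e \in num -> 0 < zdot e.1.2 z + e.2) /\
          (forall e, e \in den -> 0 < zdot e.1.2 z + e.2)
        & (forall e, e \in num -> forall j : nat,
             (j < absz (zdot e.1.2 z + e.2)%R)%N -> e.1.1 + j%:R != 0) /\
          (forall e, e \in den -> forall j : nat,
             (j < absz (zdot e.1.2 z + e.2)%R)%N -> e.1.1 + j%:R != 0)].
Proof.
move=> _ [V [_ V_repr]].
exists (entry_gamma V), (entry_num V), (entry_den V) => z Rz.
have [-> V_pos V_neq0] := V_repr z Rz.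
split; first exact: factorial_pochE.
  by split; [exact: entry_num_pos | exact: entry_den_pos].
by split; [exact: entry_num_neq0 | exact: entry_den_neq0].
Qed.
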